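(* Consider the Bregman proximal augmented Lagrangian method described in the context, with $\psi,\phi$ Legendre. Then for every $x\in\operatorname{dom}\psi$, $y\in\operatorname{dom}\phi$, $z=(x,y)$ and every $k$, $$L(s^k,y)-L(x,y^{k+1})\le\tfrac{1}{\sigma_k}\Big(D_\Phi(z,z^k)-D_\Phi(z,z^{k+1})-(1-\rho_k)D_\Phi(p^k,z^k)\Big),$$ where $z^k=(x^k,y^k)$, $p^k=(s^k,y^{k+1})$ and $D_\Phi((x',y'),(x'',y''))=D_\psi(x',x'')+D_\phi(y',y'')$.
   Context: Let $f\in\Gamma_0(\mathbb{R}^n)$, $g\in\Gamma_0(\mathbb{R}^m)$ (proper lsc convex), $A\in\mathbb{R}^{m\times n}$, $b\in\mathbb{R}^m$, $\mathcal{A}(x)=Ax-b$. $L(x,y)=f(x)+\langle\mathcal{A}(x),y\rangle-g^*(y)$; KKT operator $T(x,y)=(\partial f(x)+A^\top y)\times(\partial g^*(y)+b-Ax)$ (maximal monotone). A function $h\in\Gamma_0$ is Legendre if essentially smooth ($\operatorname{int}\operatorname{dom}h\ne\emptyset$, differentiable there, $\|\nabla h(z^\nu)\|\to\infty$ whenever $\operatorname{int}\operatorname{dom}h\ni z^\nu\to z\in\operatorname{bdry}\operatorname{dom}h$) and essentially strictly convex (strictly convex on every convex subset of $\operatorname{dom}\partial h$); $\nabla h^*$ is the inverse of $\nabla h$ on interiors of domains. $D_h(a,c)=h(a)-h(c)-\langle\nabla h(c),a-c\rangle$ for $a\in\operatorname{dom}h$, $c\in\operatorname{int}\operatorname{dom}h$,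 $+\infty$ otherwise. Let $\psi\in\Gamma_0(\mathbb{R}^n)$, $\phi\in\Gamma_0(\mathbb{R}^m)$ be Legendre, $\Phi(x,y)=\psi(x)+\phi(y)$, and assume $\operatorname{int}\operatorname{dom}\Phi\cap\operatorname{dom}T\ne\emptyset$. Bregman proximal augmented Lagrangian method: given $x^0\in\operatorname{int}\operatorname{dom}\psi$, $y^0\in\operatorname{int}\operatorname{dom}\phi$, step sizes $\sigma_k\ge\sigma>0$ and $\rho_k\in[0,1)$, it generates $s^k\in\operatorname{dom}\psi$, $x^{k+1},y^{k+1},v^k,u^k$ with $(v^k,u^k)\in T(s^k,y^{k+1})$, $x^{k+1}=\nabla\psi^*(\nabla\psi(x^k)-\sigma_kv^k)\in\operatorname{int}\operatorname{dom}\psi$, $y^{k+1}=\nabla\phi^*(\nabla\phi(y^k)-\sigma_ku^k)\in\operatorname{int}\operatorname{dom}\phi$, and $D_\psi(s^k,x^{k+1})\le\rho_k\big(D_\psi(s^k,x^k)+D_\phi(y^{k+1},y^k)\big)$. *)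

From HB Require Import structures.
From mathcomp Require Import all_boot all_order all_algebra.
From mathcomp Require Import all_classical all_reals all_analysis.
Set Implicit Arguments. Unset Strict Implicit. Unset Printing Implicit Defensive.
Import Order.TTheory GRing.Theory Num.Theory.
Import numFieldNormedType.Exports.
Local Open Scope classical_set_scope.
Local Open Scope ring_scope.

Section Defs.
Variable R : realType.

Definition dotv n (u v : 'cV[R]_n) : R := \sum_(i < n) u i 0 * v i 0.

Definition edom n (h : 'cV[R]_n -> \bar R) : set 'cV[R]_n :=
  [set x | (h x < +oo)%E].

Definition proper_fun n (h : 'cV[R]_n -> \bar R) : Prop :=
  (forall x, h x != -oo%E) /\ exists x, (h x < +oo)%E.

Definition convex_fun n (h : 'cV[R]_n -> \bar R) : Prop :=
  forall (x y : 'cV[R]_n) (t : R), 0 < t -> t < 1 ->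
    (h (t *: x + (1 - t) *: y)%R <= t%:E * h x + (1 - t)%:E * h y)%E.

Definition Gamma0 n (h : 'cV[R]_n -> \bar R) : Prop :=
  [/\ proper_fun h, lower_semicontinuous h & convex_fun h].

Definition conjf n (h : 'cV[R]_n -> \bar R) : 'cV[R]_n -> \bar R :=
  fun y => ereal_sup [set ((dotv x y)%:E - h x)%E | x in [set: 'cV[R]_n]].

Definition subdiff n (h : 'cV[R]_n -> \bar R) (x : 'cV[R]_n) : set 'cV[R]_n :=
  [set v | h x \is a fin_num /\
           forall z, (h x + (dotv v (z - x)%R)%:E <= h z)%E].

Definition dom_subdiff n (h : 'cV[R]_n -> \bar R) : set 'cV[R]_n :=
  [set x | exists v, subdiff h x v].

(* gradient (Frechet derivative of the real-valued restriction, represented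
   as a vector through the standard basis) *)
Definition gradf n (h : 'cV[R]_n -> \bar R) (c : 'cV[R]_n) : 'cV[R]_n :=
  \col_(i < n) ('d (fine \o h) c (delta_mx i 0 : 'cV[R]_n)).

Definition convex_setv n (C : set 'cV[R]_n) : Prop :=
  forall x y (t : R), C x -> C y -> 0 <= t -> t <= 1 ->
    C (t *: x + (1 - t) *: y).

Definition strictly_convex_on n (h : 'cV[R]_n -> \bar R) (C : set 'cV[R]_n) :=
  forall x y (t : R), C x -> C y -> x != y -> 0 < t -> t < 1 ->
    (h (t *: x + (1 - t) *: y)%R < t%:E * h x + (1 - t)%:E * h y)%E.

Definition essentially_smooth n (h : 'cV[R]_n -> \bar R) : Prop :=
  [/\ (interior (edom h) !=set0),
      (forall c, interior (edom h) c -> differentiable (fine \o h) c) &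
      (forall (zs : nat -> 'cV[R]_n) (z : 'cV[R]_n),
         (forall k, interior (edom h) (zs k)) ->
         zs @ \oo --> z ->
         closure (edom h) z -> ~ interior (edom h) z ->
         (fun k => `|gradf h (zs k)|) @ \oo --> +oo)].

Definition essentially_strictly_convex n (h : 'cV[R]_n -> \bar R) : Prop :=
  forall C : set 'cV[R]_n, convex_setv C -> C `<=` dom_subdiff h ->
    strictly_convex_on h C.

Definition Legendre n (h : 'cV[R]_n -> \bar R) : Prop :=
  [/\ Gamma0 h, essentially_smooth h & essentially_strictly_convex h].

Definition bregman n (h : 'cV[R]_n -> \bar R) (a c : 'cV[R]_n) : \bar R :=
  if `[< edom h a /\ interior (edom h) c >] then
    (h a - h c - (dotv (gradf h c) (a - c)%R)%:E)%E
  else +oo%E.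

Definition lagr n m (f : 'cV[R]_n -> \bar R) (g : 'cV[R]_m -> \bar R)
  (A : 'M[R]_(m, n)) (b : 'cV[R]_m) (x : 'cV[R]_n) (y : 'cV[R]_m) : \bar R :=
  (f x + (dotv (A *m x - b) y)%:E - conjf g y)%E.

(* KKT operator: (v,u) in T(x,y) *)
Definition KKT n m (f : 'cV[R]_n -> \bar R) (g : 'cV[R]_m -> \bar R)
  (A : 'M[R]_(m, n)) (b : 'cV[R]_m) (x : 'cV[R]_n) (y : 'cV[R]_m)
  (v : 'cV[R]_n) (u : 'cV[R]_m) : Prop :=
  (exists2 a, subdiff f x a & v = a + A^T *m y) /\
  (exists2 c, subdiff (conjf g) y c & u = c + b - A *m x).

End Defs.

From HB Require Import structures.
From mathcomp Require Import all_boot all_order all_algebra.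
From mathcomp Require Import all_classical all_reals all_analysis.
From mathcomp Require Import ring lra.
Set Implicit Arguments. Unset Strict Implicit. Unset Printing Implicit Defensive.
Import Order.TTheory GRing.Theory Num.Theory.
Import numFieldNormedType.Exports.
Local Open Scope classical_set_scope.
Local Open Scope ring_scope.

(* The subgradient inequalities for f and g^* at the KKT point p^k = (s^k, y^{k+1})
   bound the Lagrangian gap by <v^k, s^k - x> + <u^k, y^{k+1} - y>.  Since the
   mirror steps are gradient updates, the four-point identity of Bregman
   distances rewrites sigma_k times each inner product as a difference of four
   Bregman distances; the term D_phi(y^{k+1}, y^{k+1}) vanishes, and the
   inexactness criterion absorbs D_psi(s^k, x^{k+1}). *)

Section InnerProduct.
Variable R : realType.

Lemma dotvC n (u w : 'cV[R]_n) : dotv u w = dotv w u.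
Proof. by apply: eq_bigr => i _; rewrite mulrC. Qed.

Lemma dotvDl n (u w z : 'cV[R]_n) : dotv (u + w) z = dotv u z + dotv w z.
Proof. by rewrite /dotv -big_split; apply: eq_bigr => i _; rewrite mxE mulrDl. Qed.

Lemma dotvNl n (u z : 'cV[R]_n) : dotv (- u) z = - dotv u z.
Proof. by rewrite /dotv -sumrN; apply: eq_bigr => i _; rewrite mxE mulNr. Qed.

Lemma dotvZl n a (u z : 'cV[R]_n) : dotv (a *: u) z = a * dotv u z.
Proof. by rewrite /dotv mulr_sumr; apply: eq_bigr => i _; rewrite mxE mulrA. Qed.

Lemma dotvDr n (u w z : 'cV[R]_n) : dotv z (u + w) = dotv z u + dotv z w.
Proof. by rewrite dotvC dotvDl !(dotvC z). Qed.

Lemma dotvNr n (u z : 'cV[R]_n) : dotv z (- u) = - dotv z u.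
Proof. by rewrite dotvC dotvNl dotvC. Qed.

Lemma dotv0r n (z : 'cV[R]_n) : dotv z 0 = 0.
Proof. by rewrite /dotv big1 // => i _; rewrite mxE mulr0. Qed.

Lemma dotvE n (u z : 'cV[R]_n) : dotv u z = (u^T *m z) 0 0.
Proof. by rewrite /dotv mxE; apply: eq_bigr => i _; rewrite mxE. Qed.

Lemma dotv_trmx_mul n m (A : 'M[R]_(m, n)) (y : 'cV[R]_m) (w : 'cV[R]_n) :
  dotv (A^T *m y) w = dotv (A *m w) y.
Proof.
rewrite !dotvE trmx_mul trmxK -mulmxA.
have -> : (A *m w)^T *m y = (y^T *m (A *m w))^T by rewrite [RHS]trmx_mul trmxK.
by rewrite [RHS]mxE.
Qed.

End InnerProduct.

Section Bregman.
Variables (R : realType) (n : nat) (h : 'cV[R]_n -> \bar R).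

Definition bregmanr (a c : 'cV[R]_n) : R :=
  fine (h a) - fine (h c) - dotv (gradf h c) (a - c).

Lemma proper_edom_fin_num a : proper_fun h -> edom h a -> h a \is a fin_num.
Proof. by move=> [hN _] ha; rewrite fin_numE hN (lt_eqF ha). Qed.

Lemma bregmanE a c : proper_fun h -> edom h a -> interior (edom h) c ->
  bregman h a c = (bregmanr a c)%:E.
Proof.
move=> Ph ha hc; rewrite /bregman asboolT //.
have := proper_edom_fin_num Ph ha; have := proper_edom_fin_num Ph (interior_subset hc).
rewrite /bregmanr.
by case: (h a) => [ra| |] //; case: (h c) => [rc| |].
Qed.

Lemma bregmanrxx c : bregmanr c c = 0.
Proof. by rewrite /bregmanr !subrr dotv0r subr0. Qed.

Lemma bregmanr_four_point (a p c c' w : 'cV[R]_n) (t : R) :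
  gradf h c' = gradf h c - t *: w ->
  bregmanr a c - bregmanr a c' - (bregmanr p c - bregmanr p c') =
    t * dotv w (p - a).
Proof.
move=> grad_c'; rewrite /bregmanr grad_c'.
rewrite !(dotvDl, dotvDr, dotvNl, dotvNr, dotvZl); ring.
Qed.

End Bregman.

Lemma lagr_sub_le_KKT (R : realType) n m f g (A : 'M[R]_(m, n)) b
    (s x : 'cV[R]_n) (y' y : 'cV[R]_m) v u :
  KKT f g A b s y' v u ->
  (lagr f g A b s y - lagr f g A b x y' <= (dotv v (s - x) + dotv u (y' - y))%:E)%E.
Proof.
move=> [[a [fs_fin sub_f] ->] [c [gs_fin sub_g] ->]].
have fx := sub_f x; have gy := sub_g y.
rewrite /lagr; move: fs_fin gs_fin fx gy; set G := conjf g.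
case: (f s) => [F| |] // _; case: (G y') => [Gy| |] // _.
case: (f x) => [r1| |] //=; case: (G y) => [r2| |] //=.
2-4: by move=> _ _; rewrite ?addeNy ?addNye leNye.
rewrite -!EFinD !lee_fin => fx gy.
rewrite !(dotvDl, dotvDr, dotvNl, dotvNr) !dotv_trmx_mul.
rewrite !dotvDr !dotvNr in fx gy.
lra.
Qed.
Theorem mainTheorem15 (R : realType) (n m : nat)
  (f : 'cV[R]_n -> \bar R) (g : 'cV[R]_m -> \bar R)
  (A : 'M[R]_(m, n)) (b : 'cV[R]_m)
  (psi : 'cV[R]_n -> \bar R) (phi : 'cV[R]_m -> \bar R)
  (sigma0 : R) (sigma rho : nat -> R)
  (x s v : nat -> 'cV[R]_n) (y u : nat -> 'cV[R]_m) :
  Gamma0 f -> Gamma0 g ->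
  Legendre psi -> Legendre phi ->
  (* int dom Phi meets dom T *)
  (exists x0 y0 v0 u0, interior (edom psi) x0 /\ interior (edom phi) y0 /\
                       KKT f g A b x0 y0 v0 u0) ->
  0 < sigma0 -> (forall k, sigma0 <= sigma k) ->
  (forall k, 0 <= rho k /\ rho k < 1) ->
  interior (edom psi) (x 0%N) -> interior (edom phi) (y 0%N) ->
  (forall k, edom psi (s k)) ->
  (forall k, KKT f g A b (s k) (y k.+1) (v k) (u k)) ->
  (* x^{k+1} = grad psi^* (grad psi (x^k) - sigma_k v^k), i.e. x^{k+1} is the
     point of int dom psi whose gradient is grad psi (x^k) - sigma_k v^k *)
  (forall k, interior (edom psi) (x k.+1) /\
             gradf psi (x k.+1) = gradf psi (x k) - sigma k *: v k) ->
  (forall k, interior (edom phi) (y k.+1) /\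
             gradf phi (y k.+1) = gradf phi (y k) - sigma k *: u k) ->
  (forall k, (bregman psi (s k) (x k.+1) <=
              (rho k)%:E * (bregman psi (s k) (x k) + bregman phi (y k.+1) (y k)))%E) ->
  forall (xx : 'cV[R]_n) (yy : 'cV[R]_m) (k : nat),
    edom psi xx -> edom phi yy ->
    (lagr f g A b (s k) yy - lagr f g A b xx (y k.+1) <=
       (sigma k)^-1%:E *
       ((bregman psi xx (x k) + bregman phi yy (y k))
        - (bregman psi xx (x k.+1) + bregman phi yy (y k.+1))
        - (1 - rho k)%:E * (bregman psi (s k) (x k) + bregman phi (y k.+1) (y k))))%E.
Proof.
move=> _ _ [[psi_proper _ _] _ _] [[phi_proper _ _] _ _] _ sigma0_gt0 sigma0_le _
  x0_int y0_int s_dom kkt x_step y_step inexact xx yy k xx_dom yy_dom.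
have sigma_gt0 : 0 < sigma k by apply: lt_le_trans sigma0_gt0 (sigma0_le k).
have x_int j : interior (edom psi) (x j).
  by case: j => [|j]; [exact: x0_int | exact: (x_step j).1].
have y_int j : interior (edom phi) (y j).
  by case: j => [|j]; [exact: y0_int | exact: (y_step j).1].
move: (x_int k) (x_int k.+1) (y_int k) (y_int k.+1) (s_dom k).
move=> xk_int xk1_int yk_int yk1_int sk_dom.
have yk1_dom := interior_subset yk1_int.
have [_ /(bregmanr_four_point xx (s k)) psi_identity] := x_step k.
have [_ /(bregmanr_four_point yy (y k.+1)) phi_identity] := y_step k.
rewrite bregmanrxx in phi_identity.
have inexact_k := inexact k.
rewrite !bregmanE // in inexact_k *.
apply: le_trans (lagr_sub_le_KKT xx yy (kkt k)) _.
do 8 rewrite -?EFinB -?EFinD -?EFinM -?EFinN in inexact_k *.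
rewrite !lee_fin in inexact_k *.
rewrite ler_pdivlMl // mulrDr -psi_identity -phi_identity.
lra.
Qed.
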